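(* Let $K$ be a field, $Q$ the bipartite type $A$ quiver with vertices $y_0,x_1,\dots,x_n,y_n$ and arrows $\alpha_i\colon x_i\to y_{i-1}$, $\beta_i\colon x_i\to y_i$, $\mathbf{d}$ a dimension vector and $\mathbf{r}$ a quiver rank array with Zelevinsky permutation $v(\mathbf{r})$ and block rank matrix $\mathbf{b}=\mathbf{b}(\mathbf{r})$. Then: (1) $v(\mathbf{r})$ is the minimal length element of its $(W_P,W_P)$-double coset; (2) every box of Fulton's essential set $\mathcal{E}ss(v(\mathbf{r}))$ lies in the southeast corner of a block; (3) the length of $v(\mathbf{r})$ is $$\sum_{i=2}^{2n+1}\sum_{j=1}^{2n}\big(\mathbf{b}_{i-1,2n+1}-\mathbf{b}_{i-1,j}\big)\big(\mathbf{b}_{i,j}+\mathbf{b}_{i-1,j-1}-\mathbf{b}_{i,j-1}-\mathbf{b}_{i-1,j}\big).$$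
   Context: Setup: $\mathrm{rep}_Q(\mathbf{d})$ is the space of tuples $V=(V_a)$, $V_a\in\mathrm{Mat}_{\mathbf{d}(ha)\times\mathbf{d}(ta)}(K)$. $M_Q(V)$: block matrix with block rows $y_0,\dots,y_n$ and block columns $x_n,\dots,x_1$, $V_{\alpha_i}$ in block $(y_{i-1},x_i)$, $V_{\beta_i}$ in block $(y_i,x_i)$, zeros elsewhere; for an interval $J$ (nonempty set of consecutive vertices), $M_J(V)$ is the submatrix on block rows of the $y$-vertices and block columns of the $x$-vertices of $J$. A quiver rank array $\mathbf{r}$ is $J\mapsto\operatorname{rank}M_J(V)$ for some $V$; $\mathcal{O}_\mathbf{r}$ is the set of such $V$. $d_x=\sum\mathbf{d}(x_i)$, $d_y=\sum\mathbf{d}(y_i)$, $d=d_x+d_y$, $\zeta(V)=\begin{pmatrix}M_Q(V)&\mathbf{1}_{d_y}\\ \mathbf{1}_{d_x}&0\end{pmatrix}$. $d\times d$ matrices have row blocks of sizes $\mathbf{d}(y_0),\dots,\mathbf{d}(y_n),\mathbf{d}(x_n),\dots,\mathbf{d}(x_1)$ and column blocks of sizes $\mathbf{d}(x_n),\dots,\mathbf{d}(x_1),\mathbf{d}(y_0),\dots,\mathbf{d}(y_n)$, numbered $1..2n+1$; $Z_{i\times j}$ = block rows $1..i$, block columns $1..j$; $\mathbf{b}_{i,j}=\operatorname{rank}\zeta(V)_{i\times j}$ for $V\in\mathcal{O}_\mathbf{r}$, and $\mathbf{b}_{i,j}=0$ if $i$ or $j\notin[1,2n+1]$. $v(\mathbf{r})$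 is the unique $d\times d$ permutation matrix with exactly $\mathbf{b}_{i,j}+\mathbf{b}_{i-1,j-1}-\mathbf{b}_{i,j-1}-\mathbf{b}_{i-1,j}$ ones in block $(i,j)$ and whose ones run from northwest to southeast within each block row and each block column. A permutation $u\in S_d$ corresponds to the matrix with $1$ at $(i,u(i))$; its length is the number of inversions, equivalently the number of pairs of $1$s one of which lies strictly northeast of the other. The diagram of $u$ is the set of positions of the $d\times d$ grid with no $1$ directly north (same column, above) and no $1$ directly west (same row, left); $\mathcal{E}ss(u)$ is the set of positions $(i,j)$ in the diagram such that neither $(i+1,j)$ nor $(i,j+1)$ is in the diagram. The $(W_P,W_P)$-double coset of a permutation matrix $u$ is the set of permutation matrices obtained from $u$ by permuting rows within each block row and columns within each block column. *)

From mathcomp Require Import all_boot all_order all_algebra all_fingroup.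
Import GRing.Theory.

Definition cum (s : seq nat) (k : nat) : nat := sumn (take k s).
(* blk s a = (0-indexed) number of the block containing index a *)
Definition blk (s : seq nat) (a : nat) : nat :=
  count (fun k => cum s k.+1 <= a) (iota 0 (size s)).
Definition off (s : seq nat) (a : nat) : nat := a - cum s (blk s a).

(* dimension vector: dy i for y_i (0 <= i <= n), dx i for x_i (1 <= i <= n) *)
Definition YS (n : nat) (dy : nat -> nat) : seq nat := map dy (iota 0 n.+1).
Definition XS (n : nat) (dx : nat -> nat) : seq nat := rev (map dx (iota 1 n)).
(* row blocks of d x d matrices: y_0..y_n, x_n..x_1 *)
Definition RS n dx dy : seq nat := YS n dy ++ XS n dx.
(* column blocks of d x d matrices: x_n..x_1, y_0..y_n *)
Definition CS n dx dy : seq nat := XS n dx ++ YS n dy.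
Definition dimX n dx : nat := sumn (XS n dx).
Definition dimY n dy : nat := sumn (YS n dy).
Definition dimT n dx dy : nat := dimX n dx + dimY n dy.

(* entry of a matrix at nat indices (0 outside) *)
Definition mget {K : nzRingType} {r c : nat} (A : 'M[K]_(r, c)) (p q : nat) : K :=
  match (insub p : option 'I_r), (insub q : option 'I_c) with
  | Some i, Some j => A i j
  | _, _ => 0%R
  end.

(* M_Q(V): block rows y_0..y_n, block columns x_n..x_1;
   V_{alpha_m} (alpha m : dy(m-1) x dx(m)) in block (y_{m-1}, x_m),
   V_{beta_m}  (beta m  : dy(m)   x dx(m)) in block (y_m, x_m). *)
Definition MQ {K : nzRingType} (n : nat) (dx dy : nat -> nat)
  (alpha : forall m, 'M[K]_(dy m.-1, dx m)) (beta : forall m, 'M[K]_(dy m, dx m))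
  (a c : nat) : K :=
  let k := blk (YS n dy) a in
  let p := off (YS n dy) a in
  let m := n - blk (XS n dx) c in
  let q := off (XS n dx) c in
  if k.+1 == m then mget (alpha m) p q
  else if k == m then mget (beta m) p q
  else 0%R.

(* zeta(V) = [[M_Q(V), 1_{d_y}], [1_{d_x}, 0]] as a function of nat indices *)
Definition zeta_fun {K : nzRingType} (n : nat) (dx dy : nat -> nat)
  (alpha : forall m, 'M[K]_(dy m.-1, dx m)) (beta : forall m, 'M[K]_(dy m, dx m))
  (a c : nat) : K :=
  if a < dimY n dy then
    (if c < dimX n dx then MQ n dx dy alpha beta a c else (((a == c - dimX n dx)%N)%:R)%R)
  else
    (if c < dimX n dx then (((a - dimY n dy == c)%N)%:R)%R else 0%R).

Definition zeta {K : nzRingType} (n : nat) (dx dy : nat -> nat)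
  (alpha : forall m, 'M[K]_(dy m.-1, dx m)) (beta : forall m, 'M[K]_(dy m, dx m))
  : 'M[K]_(dimT n dx dy) :=
  (\matrix_(a, c) zeta_fun n dx dy alpha beta a c)%R.

(* block rank matrix b_{i,j} (1-indexed blocks), 0 outside [1, 2n+1] *)
Definition brank {K : fieldType} (n : nat) (dx dy : nat -> nat)
  (alpha : forall m, 'M[K]_(dy m.-1, dx m)) (beta : forall m, 'M[K]_(dy m, dx m))
  (i j : nat) : nat :=
  if (0 < i <= n.*2.+1) && (0 < j <= n.*2.+1) then
    \rank (\matrix_(a < cum (RS n dx dy) i, c < cum (CS n dx dy) j)
              zeta_fun n dx dy alpha beta a c)%R
  else 0.

(* ---------- permutations; u has its 1 at (i, u i) ---------- *)
(* u is the Zelevinsky permutation for b: block (I+1,J+1) (1-indexed) contains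
   b_{I+1,J+1} + b_{I,J} - b_{I+1,J} - b_{I,J+1} ones, and the ones run NW to SE
   within each block row and each block column. N = number of blocks. *)
Definition zel_perm (N : nat) (R C : seq nat) (b : nat -> nat -> nat) {d : nat}
  (u : 'S_d) : Prop :=
  (forall I J, I < N -> J < N ->
     ((#|[set i : 'I_d | (blk R i == I) && (blk C (u i) == J)]|)%:Z
       = (b I.+1 J.+1)%:Z + (b I J)%:Z - (b I.+1 J)%:Z - (b I J.+1)%:Z)%R) /\
  (forall i1 i2 : 'I_d, blk R i1 = blk R i2 -> i1 < i2 -> u i1 < u i2) /\
  (forall j1 j2 : 'I_d, blk C j1 = blk C j2 -> j1 < j2 ->
     (u^-1)%g j1 < (u^-1)%g j2).

(* length = number of inversions = pairs of 1s, one strictly NE of the other *)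
Definition perm_len {d : nat} (u : 'S_d) : nat :=
  #|[set p : 'I_d * 'I_d | (p.1 < p.2) && (u p.2 < u p.1)]|.

(* w is in the (W_P,W_P)-double coset of u: obtained by permuting rows within
   block rows (p) and columns within block columns (q) *)
Definition in_dcoset (R C : seq nat) {d : nat} (w u : 'S_d) : Prop :=
  exists p q : 'S_d,
    (forall i, blk R (p i) = blk R i) /\ (forall j, blk C (q j) = blk C j) /\
    (forall i, w i = q (u (p i))).

(* Fulton's diagram: (i,j) with no 1 weakly north (in column j, row <= i)
   and no 1 weakly west (in row i, column <= j) *)
Definition in_diagram {d : nat} (u : 'S_d) (i j : nat) : bool :=
  [exists a : 'I_d, exists c : 'I_d,
     [&& val a == i, val c == j, j < u a & i < (u^-1)%g c]].

Definition in_ess {d : nat} (u : 'S_d) (i j : nat) : bool :=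
  [&& in_diagram u i j, ~~ in_diagram u i.+1 j & ~~ in_diagram u i j.+1].

Definition se_corner (R C : seq nat) (i j : nat) : bool :=
  (i.+1 == cum R (blk R i).+1) && (j.+1 == cum C (blk C j).+1).

From mathcomp Require Import all_boot all_order all_algebra all_fingroup zify.
Import GRing.Theory.

(* All three statements only use that the permutation [u] lists its ones from
   northwest to southeast inside every block row and block column, with
   prescribed numbers of ones per block.  Inside a block nothing can be
   inverted, so the inversions of [u] are exactly the pairs of ones lying in
   blocks that are strictly NE/SW of each other; permuting within blocks keeps
   these pairs and can only add inversions inside blocks, and the NW-to-SE
   condition with the block counts determines [u] uniquely, giving (1).  An
   essential box lies at the SE corner of its block since moving one step
   within a block keeps it in the diagram, giving (2).  Counting the
   NE/SW pairs block by block, a one in block [(i,j)] is paired with the ones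
   in blocks strictly north and strictly east of its block, whose number is
   [b(i-1,2n+1) - b(i-1,j)], giving (3). *)

Set Implicit Arguments.
Unset Strict Implicit.
Unset Printing Implicit Defensive.

Section BlockIndices.
Variable s : seq nat.

Lemma cum_mono k k' : k <= k' -> cum s k <= cum s k'.
Proof. by move=> le; rewrite /cum -(subnKC le) takeD sumn_cat leq_addr. Qed.

Lemma cum_le_sumn k : cum s k <= sumn s.
Proof. by rewrite /cum -{2}(cat_take_drop k s) sumn_cat leq_addr. Qed.

Lemma ltn_count_iota (P : pred nat) : (forall k, P k.+1 -> P k) ->
  forall m k, k < m -> (k < count P (iota 0 m)) = P k.
Proof.
move=> Pdown; have Pdown_add j k : P (k + j) -> P k.
  by elim: j k => [|j IH] k; rewrite ?addn0 // addnS => /Pdown /IH.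
elim=> [//|m IH] k; rewrite ltnS -[m.+1]addn1 iotaD count_cat /= add0n addn0.
case Pm: (P m).
  have ->: count P (iota 0 m) = m.
    apply/eqP; rewrite -[X in _ == X](size_iota 0 m) -all_count.
    apply/allP=> x; rewrite mem_iota add0n => /andP [_ xm].
    by apply: (Pdown_add (m - x)); rewrite subnKC // ltnW.
  by rewrite addn1 ltnS => km; rewrite km; apply/esym/(Pdown_add (m - k)); rewrite subnKC.
rewrite addn0 leq_eqVlt => /orP [/eqP -> | km]; last exact: IH.
by rewrite Pm ltnNge -[X in _ <= X](size_iota 0 m) count_size.
Qed.

Lemma ltn_blk a k : k < size s -> (k < blk s a) = (cum s k.+1 <= a).
Proof.
move=> ks; rewrite /blk (@ltn_count_iota (fun k => cum s k.+1 <= a)) //.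
by move=> j /= le_a; apply: leq_trans le_a; apply: cum_mono.
Qed.

Lemma blk_mono : {homo blk s : a a' / a <= a'}.
Proof. by move=> a a' le; apply: sub_count => k /= le_k; apply: leq_trans le_k le. Qed.

Lemma blk_ltn_size a : a < sumn s -> blk s a < size s.
Proof.
move=> a_lt; rewrite ltnNge; apply/negP=> le_size.
have size_gt0 : 0 < size s by case: s a_lt {le_size}.
have := @ltn_blk a (size s).-1; rewrite ltn_predL size_gt0 prednK //.
move=> /(_ isT); rewrite /cum take_size le_size => /esym.
by rewrite leqNgt a_lt.
Qed.

Lemma last_in_blk a : a < sumn s ->
  (a.+1 < sumn s -> blk s a <> blk s a.+1) -> a.+1 = cum s (blk s a).+1.
Proof.
move=> a_lt next_blk; have blk_lt := blk_ltn_size a_lt.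
have a_lt_cum : a < cum s (blk s a).+1 by rewrite ltnNge -ltn_blk // ltnn.
apply/eqP; rewrite eqn_leq a_lt_cum /=.
have [aS_lt|] := ltnP a.+1 (sumn s); last exact: leq_trans (cum_le_sumn _).
rewrite -ltn_blk // ltn_neqAle blk_mono // andbT.
by apply/eqP=> eq_blk; apply: next_blk.
Qed.

End BlockIndices.

Section BlockPermutations.
Variables (d : nat) (r c : nat -> nat).
Hypotheses (r_mono : {homo r : a a' / a <= a'}) (c_mono : {homo c : a a' / a <= a'}).

Definition nw_to_se (u : 'S_d) : Prop :=
  (forall i1 i2 : 'I_d, r i1 = r i2 -> i1 < i2 -> u i1 < u i2) /\
  (forall j1 j2 : 'I_d, c j1 = c j2 -> j1 < j2 -> (u^-1)%g j1 < (u^-1)%g j2).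

Definition inversions (u : 'S_d) : {set 'I_d * 'I_d} :=
  [set x : 'I_d * 'I_d | (x.1 < x.2) && (u x.2 < u x.1)].

Definition block_inversions (u : 'S_d) : {set 'I_d * 'I_d} :=
  [set x : 'I_d * 'I_d | (r x.1 < r x.2) && (c (u x.2) < c (u x.1))].

Definition block_count (u : 'S_d) (I J : nat) : nat :=
  #|[set i : 'I_d | (r i == I) && (c (u i) == J)]|.

Lemma block_inversions_sub u : block_inversions u \subset inversions u.
Proof.
have ltn_homo f a a' : {homo f : x y / x <= y} -> f a < f a' -> a < a'.
  by move=> f_mono; apply: contraTT; rewrite -!leqNgt => /f_mono.
apply/subsetP=> [[x1 x2]]; rewrite !inE /= => /andP [lt_r lt_c].
by rewrite (ltn_homo _ _ _ r_mono lt_r) (ltn_homo _ _ _ c_mono lt_c).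
Qed.

Lemma nw_to_seP u : nw_to_se u <-> inversions u = block_inversions u.
Proof.
split=> [[rows cols] | E].
  apply/eqP; rewrite eqEsubset block_inversions_sub andbT.
  apply/subsetP=> [[x1 x2]]; rewrite !inE /= => /andP [lt12 ltu].
  rewrite ltn_neqAle (r_mono (ltnW lt12)) ltn_neqAle (c_mono (ltnW ltu)) !andbT.
  apply/andP; split; apply/eqP=> eq_blk.
    by have := rows _ _ eq_blk lt12; rewrite ltnNge ltnW.
  have := cols _ _ eq_blk ltu; rewrite !permK => lt21.
  by have := ltn_trans lt21 lt12; rewrite ltnn.
have inv_block_inv x : x \in inversions u -> x \in block_inversions u by rewrite E.
split=> [i1 i2 eq_r lt12 | j1 j2 eq_c lt12].
  have [//|lt21|/val_inj/perm_inj eq12] := ltngtP (u i1) (u i2).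
    have := inv_block_inv (i1, i2); rewrite !inE /= lt12 lt21 eq_r ltnn.
    by move/(_ isT).
  by move: lt12; rewrite eq12 ltnn.
have [//|lt21|/val_inj eq12] := ltngtP ((u^-1)%g j1) ((u^-1)%g j2).
  have := inv_block_inv ((u^-1)%g j2, (u^-1)%g j1).
  by rewrite !inE /= !permKV lt21 lt12 eq_c ltnn andbF; move/(_ isT).
by move: lt12; rewrite -(permKV u j1) eq12 permKV ltnn.
Qed.

(* Comparing two such permutations at the first row where they differ: the one
   placing its one further east there would miss a one in that block. *)
Lemma nw_to_se_le_first_difference u w : nw_to_se w ->
  (forall I J, block_count u I J = block_count w I J) ->
  forall i : 'I_d, (forall i0 : 'I_d, i0 < i -> u i0 = w i0) -> w i <= u i.
Proof.
move=> [rows cols] eq_count i agree; rewrite leqNgt; apply/negP=> lt_uw.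
set j := u i; set i' := (w^-1)%g j.
have ne_i : i' != i.
  by apply: contraTneq lt_uw => eq_i; rewrite -{2}eq_i /i' permKV ltnn.
have lt_ii' : i < i'.
  have [//|lt_i'i|/val_inj eq_i] := ltngtP i i'; last by rewrite eq_i eqxx in ne_i.
  by have := agree _ lt_i'i; rewrite permKV => /perm_inj eq_i; rewrite eq_i eqxx in ne_i.
have lt_c : c j < c (w i).
  rewrite ltn_neqAle (c_mono (ltnW lt_uw)) andbT; apply/eqP=> eq_c.
  have := cols _ _ eq_c lt_uw; rewrite permK -/i' => lt_i'i.
  by have := ltn_trans lt_i'i lt_ii'; rewrite ltnn.
have : block_count w (r i) (c j) < block_count u (r i) (c j).
  apply: (@leq_ltn_trans
    #|[set i0 : 'I_d | (i0 < i) && ((r i0 == r i) && (c (u i0) == c j))]|).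
    apply: subset_leq_card; apply/subsetP=> i0; rewrite !inE => /andP [/eqP e1 /eqP e2].
    have [lt_i0|gt_i0|/val_inj eq_i0] := ltngtP i0 i.
    - by rewrite agree // e1 e2 !eqxx.
    - have := rows _ _ (esym e1) gt_i0 => /ltnW /c_mono; rewrite e2 => le_c.
      by have := leq_trans lt_c le_c; rewrite ltnn.
    - by move: lt_c; rewrite -e2 eq_i0 ltnn.
  apply: proper_card; rewrite properE; apply/andP; split.
    by apply/subsetP=> i0; rewrite !inE => /andP [].
  by apply/subsetPn; exists i; rewrite !inE ?ltnn // !eqxx.
by rewrite eq_count ltnn.
Qed.

Lemma nw_to_se_block_count_inj u w : nw_to_se u -> nw_to_se w ->
  (forall I J, block_count u I J = block_count w I J) -> u = w.
Proof.
move=> Nu Nw eq_count; suff agree k (i : 'I_d) : i < k -> u i = w i.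
  by apply/permP => i; apply: (agree i.+1).
elim: k i => [//|k IH] i; rewrite ltnS leq_eqVlt => /orP [/eqP eq_i|]; last exact: IH.
have below (i0 : 'I_d) : i0 < i -> u i0 = w i0 by rewrite eq_i; apply: IH.
have above (i0 : 'I_d) : i0 < i -> w i0 = u i0 by move/below.
apply/val_inj/eqP; rewrite eqn_leq (nw_to_se_le_first_difference Nw eq_count below).
by rewrite (nw_to_se_le_first_difference Nu (fun I J => esym (eq_count I J)) above).
Qed.

Section DoubleCoset.
Variables (u w p q : 'S_d).
Hypotheses (p_r : forall i, r (p i) = r i) (q_c : forall j, c (q j) = c j).
Hypothesis wE : forall i, w i = q (u (p i)).

Lemma card_block_inversions_dcoset :
  #|block_inversions w| = #|block_inversions u|.
Proof.
have p2_inj : injective (fun x : 'I_d * 'I_d => (p x.1, p x.2)).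
  by move=> [a1 a2] [b1 b2] [/perm_inj -> /perm_inj ->].
rewrite -[RHS](card_preimset _ p2_inj); apply: eq_card => [[x1 x2]].
by rewrite !inE /= !wE !q_c !p_r.
Qed.

Lemma block_count_dcoset I J : block_count u I J = block_count w I J.
Proof.
rewrite /block_count -[LHS](card_preimset _ (@perm_inj _ p)).
by apply: eq_card => x; rewrite !inE wE q_c p_r.
Qed.

Lemma nw_to_se_dcoset_min : nw_to_se u -> w != u ->
  #|inversions u| < #|inversions w|.
Proof.
move=> Nu ne_wu; rewrite (nw_to_seP u).1 // -card_block_inversions_dcoset.
apply: proper_card; rewrite properEneq block_inversions_sub andbT.
apply: contra ne_wu => /eqP E; apply/eqP/esym/nw_to_se_block_count_inj => //.
  by apply/nw_to_seP.
exact: block_count_dcoset.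
Qed.

End DoubleCoset.

Definition nw_count (u : 'S_d) (i j : nat) : int :=
  (\sum_(a : 'I_d) ((r a < i)%N && (c (u a) < j)%N)%:R)%R.

Lemma nw_countSS u i j : (nw_count u i.+1 j.+1 =
  (block_count u i j)%:R + nw_count u i.+1 j + nw_count u i j.+1 - nw_count u i j)%R.
Proof.
rewrite /block_count -sum1_card natr_sum big_mkcond /nw_count -!big_split -sumrB /=.
apply: eq_bigr => a _; rewrite inE !ltnS.
by case: (ltngtP (r a) i); case: (ltngtP (c (u a)) j); rewrite /= ?(addr0, add0r, subr0, subrr).
Qed.

Lemma nw_countE N u (b : nat -> nat -> nat) :
  (forall j, b 0 j = 0) -> (forall i, b i 0 = 0) ->
  (forall I J, I < N -> J < N -> ((block_count u I J)%:Z =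
     (b I.+1 J.+1)%:Z + (b I J)%:Z - (b I.+1 J)%:Z - (b I J.+1)%:Z)%R) ->
  forall i j, i <= N -> j <= N -> ((b i j)%:Z = nw_count u i j)%R.
Proof.
move=> b0j bi0 count_b; elim=> [|i IHi] j iN jN; first by rewrite b0j /nw_count big1.
elim: j jN => [|j IHj] jN.
  by rewrite bi0 /nw_count big1 // => a _; rewrite andbF.
have := count_b i j iN jN.
rewrite nw_countSS -IHi ?(ltnW iN) // -IHi ?(ltnW iN) ?(ltnW jN) // -IHj ?(ltnW jN) //.
by rewrite natz; lia.
Qed.

Lemma sum_nat_indicator m n k :
  (\sum_(m <= i < n) ((i == k)%:R : int))%R = ((m <= k)%N && (k < n)%N)%:R%R.
Proof.
elim: n => [|n IH]; first by rewrite big_geq // ltn0 andbF.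
have [mn|nm] := leqP m n; last first.
  by rewrite big_geq //; case: (leqP m k) => //= mk; rewrite ltnNge (leq_trans nm mk).
rewrite big_nat_recr //= IH ltnS.
by case: (ltngtP k n) => [h|h|->]; rewrite ?andbT ?andbF ?mn ?addr0 ?add0r.
Qed.

Lemma mulr_indicator (a b : bool) : ((a%:R * b%:R : int) = (a && b)%:R)%R.
Proof. by case: a; case: b; rewrite ?mul1r ?mul0r. Qed.

(* Summing over block positions [(i,j)], a pair of ones in blocks [(I1,J1)]
   and [(I2,J2)] is counted once, at [(i,j) = (I2+1,J2+1)], exactly when the
   first block lies strictly north and the second strictly west of the other. *)
Lemma sum_block_pair N I1 I2 J1 J2 : I2 < N -> J1 < N ->
  (\sum_(2 <= i < N.+1) \sum_(1 <= j < N)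
     ((((I1 < i.-1)%N && (j <= J1)%N)%:R : int) * ((I2 == i.-1)%N && (J2 == j.-1)%N)%:R)
   = ((I1 < I2)%N && (J2 < J1)%N)%:R)%R.
Proof.
move=> I2N J1N.
rewrite (eq_big_nat _ _ (F2 := fun i => \sum_(1 <= j < N)
   (((i == I2.+1)%:R : int) * (((j == J2.+1)%:R : int) *
     ((I1 < I2)%N && (J2 < J1)%N)%:R)))%R); last first.
  move=> i /andP [i2 _]; apply: eq_big_nat => j /andP [j1 _].
  by rewrite !mulr_indicator; congr (nat_of_bool _)%:R%R; apply/idP/idP; lia.
under eq_bigr do rewrite -mulr_sumr -mulr_suml sum_nat_indicator.
rewrite -mulr_suml sum_nat_indicator.
have [/andP [lt_I lt_J]|_] := boolP ((I1 < I2) && (J2 < J1)); last by rewrite !mulr0.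
have -> : (2 <= I2.+1) && (I2.+1 < N.+1) by lia.
have -> : (1 <= J2.+1) && (J2.+1 < N) by lia.
by rewrite !mul1r.
Qed.

Lemma card_block_inversionsE N u (b : nat -> nat -> nat) :
  (forall a : 'I_d, r a < N) -> (forall a : 'I_d, c a < N) ->
  (forall j, b 0 j = 0) -> (forall i, b i 0 = 0) ->
  (forall I J, I < N -> J < N -> ((block_count u I J)%:Z =
     (b I.+1 J.+1)%:Z + (b I J)%:Z - (b I.+1 J)%:Z - (b I J.+1)%:Z)%R) ->
  ((#|block_inversions u|)%:Z = \sum_(2 <= i < N.+1) \sum_(1 <= j < N)
     (((b i.-1 N)%:Z - (b i.-1 j)%:Z) *
      ((b i j)%:Z + (b i.-1 j.-1)%:Z - (b i j.-1)%:Z - (b i.-1 j)%:Z)))%R.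
Proof.
move=> rN cN b0j bi0 count_b; have b_nw := nw_countE b0j bi0 count_b.
have count_sum I J : ((block_count u I J)%:Z =
    \sum_(a : 'I_d) (((r a == I)%N && (c (u a) == J)%N)%:R : int))%R.
  rewrite -natz /block_count -sum1_card natr_sum big_mkcond /=.
  by apply: eq_bigr => a _; rewrite inE; case: (_ && _).
(* Each summand counts the pairs of ones, the second in block [(i,j)] and the
   first in a block strictly north and strictly east of it. *)
rewrite (eq_big_nat _ _ (F2 := fun i => \sum_(1 <= j < N)
   \sum_(a1 : 'I_d) \sum_(a2 : 'I_d)
     ((((r a1 < i.-1)%N && (j <= c (u a1))%N)%:R : int) *
       ((r a2 == i.-1)%N && (c (u a2) == j.-1)%N)%:R))%R); last first.
  move=> i /andP [i2 iN]; apply: eq_big_nat => j /andP [j1 jN].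
  have := count_b i.-1 j.-1; rewrite !prednK ?(leq_trans _ i2) // => <-; try lia.
  rewrite count_sum (b_nw i.-1 N) ?(b_nw i.-1 j) ?leqnn; try lia.
  rewrite /nw_count -sumrB big_distrlr /=; apply: eq_bigr => a1 _.
  apply: eq_bigr => a2 _; congr (_ * _)%R.
  rewrite (cN (u a1)) andbT; case: (r a1 < i.-1)%N => /=; last by rewrite subrr.
  by case: (ltnP (c (u a1)) j) => _; rewrite ?subrr ?subr0.
under eq_bigr => i _ do rewrite exchange_big.
rewrite exchange_big.
under eq_bigr => a1 _ do under eq_bigr => i _ do rewrite exchange_big.
under eq_bigr => a1 _ do rewrite exchange_big.
under eq_bigr => a1 _ do under eq_bigr => a2 _ do
  rewrite (@sum_block_pair N (r a1) (r a2) (c (u a1)) (c (u a2)) (rN a2) (cN (u a1))).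
rewrite pair_bigA /= -natz -sum1_card natr_sum big_mkcond /=.
by apply: eq_bigr => [[a1 a2]] _; rewrite inE /=; case: (_ && _).
Qed.

End BlockPermutations.

(* A box of the diagram stays in the diagram one step south (resp. east)
   inside its block, because the ones of [u] run NW to SE there. *)
Lemma ess_se_corner (R C : seq nat) d (u : 'S_d) : sumn R = d -> sumn C = d ->
  nw_to_se (blk R) (blk C) u -> forall i j, in_ess u i j -> se_corner R C i j.
Proof.
move=> sumR sumC [rows cols] i j /and3P [diag_ij not_south not_east].
case/existsP: diag_ij => a /existsP [k /and4P [/eqP ea /eqP ek lt_ua lt_uk]].
subst i j; apply/andP; split; apply/eqP; apply: last_in_blk.
- by rewrite sumR ltn_ord.
- rewrite sumR => lt eq_blk; move/negP: not_south; apply; apply/existsP.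
  exists (Ordinal lt); apply/existsP; exists k; rewrite /= !eqxx /=.
  have lt_u : u a < u (Ordinal lt) by apply: rows => /=.
  rewrite (ltn_trans lt_ua lt_u) /=.
  have [//|lt_k|eq_k] := ltngtP a.+1 ((u^-1)%g k); first by rewrite ltnNge lt_uk in lt_k.
  have eqO : Ordinal lt = (u^-1)%g k by apply: val_inj.
  by move: lt_u; rewrite eqO permKV ltnNge ltnW.
- by rewrite sumC ltn_ord.
- rewrite sumC => lt eq_blk; move/negP: not_east; apply; apply/existsP.
  exists a; apply/existsP; exists (Ordinal lt); rewrite /= !eqxx /=.
  have lt_ui : (u^-1)%g k < (u^-1)%g (Ordinal lt) by apply: cols => /=.
  rewrite (ltn_trans lt_uk lt_ui) andbT.
  have [//|lt_a|eq_a] := ltngtP k.+1 (u a); first by rewrite ltnNge lt_ua in lt_a.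
  have eqO : Ordinal lt = u a by apply: val_inj.
  by move: lt_ui; rewrite eqO permK ltnNge ltnW.
Qed.

Lemma sumn_RS n dx dy : sumn (RS n dx dy) = dimT n dx dy.
Proof. by rewrite /RS /dimT /dimX /dimY sumn_cat addnC. Qed.

Lemma sumn_CS n dx dy : sumn (CS n dx dy) = dimT n dx dy.
Proof. by rewrite /CS sumn_cat. Qed.

Lemma size_RS n dx dy : size (RS n dx dy) = n.*2.+1.
Proof. by rewrite size_cat /YS /XS size_rev !size_map !size_iota -addnn addSn. Qed.

Lemma size_CS n dx dy : size (CS n dx dy) = n.*2.+1.
Proof. by rewrite size_cat /YS /XS size_rev !size_map !size_iota -addnn addnS. Qed.

Theorem lemma4p10 (K : fieldType) (n : nat) (dx dy : nat -> nat)
  (alpha : forall m, 'M[K]_(dy m.-1, dx m)) (beta : forall m, 'M[K]_(dy m, dx m))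
  (u : 'S_(dimT n dx dy)) :
  let b := brank n dx dy alpha beta in
  zel_perm n.*2.+1 (RS n dx dy) (CS n dx dy) b u ->
  [/\ (forall w : 'S_(dimT n dx dy), in_dcoset (RS n dx dy) (CS n dx dy) w u ->
          w != u -> perm_len u < perm_len w),
      (forall i j : nat, in_ess u i j -> se_corner (RS n dx dy) (CS n dx dy) i j)
    & ((perm_len u)%:Z =
       \sum_(2 <= i < n.*2.+2) \sum_(1 <= j < n.*2.+1)
          (((b i.-1 n.*2.+1)%:Z - (b i.-1 j)%:Z) *
           ((b i j)%:Z + (b i.-1 j.-1)%:Z - (b i j.-1)%:Z - (b i.-1 j)%:Z)))%R].
Proof.
move=> b [count_b nwse_u].
have blk_R_lt (a : 'I_(dimT n dx dy)) : blk (RS n dx dy) a < n.*2.+1.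
  by rewrite -(size_RS n dx dy) blk_ltn_size // sumn_RS.
have blk_C_lt (a : 'I_(dimT n dx dy)) : blk (CS n dx dy) a < n.*2.+1.
  by rewrite -(size_CS n dx dy) blk_ltn_size // sumn_CS.
have blk_R_mono := @blk_mono (RS n dx dy).
have blk_C_mono := @blk_mono (CS n dx dy).
split.
- move=> w [p [q [p_blk [q_blk wE]]]].
  exact: (nw_to_se_dcoset_min blk_R_mono blk_C_mono p_blk q_blk wE nwse_u).
- exact: ess_se_corner (sumn_RS n dx dy) (sumn_CS n dx dy) nwse_u.
- change (perm_len u) with #|inversions u|.
  rewrite (nw_to_seP blk_R_mono blk_C_mono u).1 //.
  by apply: card_block_inversionsE blk_R_lt blk_C_lt _ _ count_b => [j|i];
    rewrite /b /brank ?andbF.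
Qed.
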